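(* In the setting of the flag $\mathcal{F}=(\mathcal{F}_1,\dots,\mathcal{F}_r)$, $r\ge 2$, with $\mathcal{F}_i=\bigoplus_{j=0}^{s_i-1}\mathbb{F}_{q^m}\alpha^{lj}$ and $1\le s_1<\dots<s_r\le L$, assume $L<s=n/m$. Then every subspace of $\mathcal{F}$ is a subfield of $\mathbb{F}_{q^n}$ (i.e. $\mathcal{F}$ is a Galois flag and $\mathrm{Orb}(\mathcal{F})$ is a Galois flag code) if and only if the type of $\mathcal{F}$ is $(m,mL)$, i.e. $r=2$, $s_1=1$, $s_2=L$.
   Context: $q$ prime power; $m$ divides $n$; $\alpha$ is a primitive element of $\mathbb{F}_{q^n}$; $l$ is an integer with $1\le l<\frac{q^n-1}{q^m-1}$; $L$ is the degree of the minimal polynomial of $\alpha^l$ over $\mathbb{F}_{q^m}$ (so $L\mid n/m$). Subspaces are $\mathbb{F}_q$-subspaces of $\mathbb{F}_{q^n}$; a flag is a chain $\{0\}\subsetneq\mathcal{F}_1\subsetneq\cdots\subsetneq\mathcal{F}_r\subsetneq\mathbb{F}_{q^n}$, its type being the vector of dimensions (here $(ms_1,\dots,ms_r)$). A Galois flag is a flag all of whose subspaces are subfields of $\mathbb{F}_{q^n}$, and a Galois flag code is the orbit $\mathrm{Orb}_\beta$ of a Galois flag under multiplication by powers of some $\beta\in\mathbb{F}_{q^n}^\ast$. *)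

From HB Require Import structures.
From mathcomp Require Import all_boot all_order all_algebra all_field.
Set Implicit Arguments. Unset Strict Implicit. Unset Printing Implicit Defensive.
Import GRing.Theory.
Local Open Scope ring_scope.

(* An F-subspace V of the field L is a subfield: it contains 1, is closed
   under multiplication and under inversion of nonzero elements
   (closure under addition/opposite is automatic for a subspace). *)
Definition is_subfield (F : fieldType) (L : fieldExtType F) (V : {vspace L}) : Prop :=
  [/\ (1 : L) \in V,
      (forall x y, x \in V -> y \in V -> x * y \in V) &
      (forall x, x \in V -> x != 0 -> x^-1 \in V)].

Definition primitive_elt (F : fieldType) (L : fieldExtType F) (a : L) : Prop :=
  forall x : L, x != 0 -> exists k : nat, x = a ^+ k.

Definition flag_sub (F : fieldType) (L : fieldExtType F) (E : {vspace L})
  (a : L) (l k : nat) : {vspace L} :=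
  (\sum_(j < k) (E * <[a ^+ (l * j)]>))%VS.

From HB Require Import structures.
From mathcomp Require Import all_boot all_order all_algebra all_field.
From mathcomp Require Import zify.
Import GRing.Theory.
Local Open Scope ring_scope.

(* Write b = a^l and d = [E(b) : E], the degree of the
   minimal polynomial of b over E.  The flag space F_k = sum_{j<k} E b^j
   has E-dimension at most k, and for k = d it is exactly the field E(b);
   F_1 = E.  Conversely, if F_k is a subfield with k >= 2, it contains E
   and b, hence E(b), so d <= dim_E F_k <= k.  Hence in a Galois flag every
   space F_{s_i} with s_i >= 2 has s_i >= d; combined with 1 <= s_1 < ... <
   s_r <= d and r >= 2 this forces the type (1, d). *)

Lemma aspace_is_subfield {F : fieldType} {L : fieldExtType F} (K : {aspace L}) :
  is_subfield (K : {vspace L}).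
Proof.
split; first exact: mem1v.
- by move=> u v Ku Kv; apply: memvM.
- by move=> u Ku _; rewrite memvV.
Qed.

Section FlagSpaces.
Variables (F : fieldType) (L : fieldExtType F) (E : {subfield L}) (a : L) (l : nat).

Lemma flag_subE (k : nat) :
  flag_sub E a l k = (\sum_(j < k) (E * <[(a ^+ l) ^+ j]>))%VS.
Proof. by apply: eq_bigr => j _; rewrite exprM. Qed.

Lemma flag_sub1 : flag_sub E a l 1 = E.
Proof. by rewrite /flag_sub big_ord1 muln0 expr0 prodv1. Qed.

Lemma flag_sub_adjoin_degree :
  flag_sub E a l (adjoin_degree E (a ^+ l)) = <<E; a ^+ l>>%VS.
Proof. by rewrite flag_subE Fadjoin_eq_sum. Qed.

Lemma flag_sub1_subfield : is_subfield (flag_sub E a l 1).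
Proof. by rewrite flag_sub1; apply: aspace_is_subfield. Qed.

Lemma flag_sub_adjoin_degree_subfield :
  is_subfield (flag_sub E a l (adjoin_degree E (a ^+ l))).
Proof.
by rewrite flag_sub_adjoin_degree; apply: (aspace_is_subfield <<E; a ^+ l>>%AS).
Qed.

Lemma dim_flag_sub (k : nat) : (\dim (flag_sub E a l k) <= k * \dim E)%N.
Proof.
apply: leq_trans (dimv_leq_sum _ _ _) _.
rewrite -[X in (_ <= X * _)%N]card_ord -sum_nat_const.
apply: leq_sum => j _; apply: leq_trans (dim_prodv _ _) _.
by rewrite dim_vline; case: (_ != 0); rewrite ?muln1 ?muln0.
Qed.

(* A flag space F_k with k >= 2 that is a subfield contains E and b, hence
   the field E(b); comparing dimensions gives [E(b) : E] <= k. *)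
Lemma adjoin_degree_le_subfield_flag (k : nat) :
  (2 <= k)%N -> is_subfield (flag_sub E a l k) ->
  (adjoin_degree E (a ^+ l) <= k)%N.
Proof.
move=> k_ge2 [_ mulV _]; set V := flag_sub E a l k.
have EV : (E <= V)%VS.
  rewrite /V /flag_sub (bigD1 (Ordinal (ltnW k_ge2))) //= muln0 expr0 prodv1.
  exact: addvSl.
have bV : a ^+ l \in V.
  rewrite /V /flag_sub (bigD1 (Ordinal k_ge2)) //= muln1.
  apply: (subvP (addvSl _ _)); rewrite -[X in X \in _]mul1r.
  by apply: memv_mul; [exact: mem1v | exact: memv_line].
have powV i : (a ^+ l) ^+ i \in V.
  by elim: i => [|i IH]; rewrite ?expr0 ?(subvP EV _ (mem1v E)) // exprS mulV.
have EbV : (<<E; a ^+ l>> <= V)%VS.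
  rewrite Fadjoin_eq_sum; apply/subv_sumP => i _.
  apply/prodvP => u v Eu /vlineP [c ->].
  by apply: mulV; [apply: (subvP EV) | apply: memvZ; apply: powV].
have := leq_trans (dimvS EbV) (dim_flag_sub k).
by rewrite dim_Fadjoin leq_pmul2r // adim_gt0.
Qed.

End FlagSpaces.

Lemma increasing_seq_one_d (s : seq nat) (d : nat) :
  (2 <= size s)%N -> sorted ltn s -> (1 <= head 0 s)%N -> (last 0 s <= d)%N ->
  {in s, forall k, 2 <= k -> d <= k}%N ->
  s = [:: 1; d]%N.
Proof.
case: s => [|x [|y t]] //= _ /andP [lt_xy path_yt] x_ge1 last_le large.
have y_ge2 : (2 <= y)%N by apply: leq_ltn_trans x_ge1 lt_xy.
have d_le_y : (d <= y)%N by apply: large; rewrite // !inE eqxx orbT.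
case: t path_yt last_le large => [|z t] path_yt /= last_le large.
  have x1 : x = 1%N.
    case: (ltnP 1 x) => x_ge2; last by lia.
    by have := large x (mem_head _ _) x_ge2; lia.
  by rewrite x1; congr [:: _; _]; lia.
have y_lt_last : (y < last z t)%N.
  by apply: (allP (order_path_min ltn_trans path_yt)); apply: mem_last.
lia.
Qed.

Theorem mainTheorem6 (F : finFieldType) (L : fieldExtType F) (E : {subfield L})
    (a : L) (l : nat) (s : seq nat) :
  let q := #|F| in
  let n := \dim {: L} in
  let m := \dim E in
  let Lmin := (size (minPoly E (a ^+ l))).-1 in
  (m %| n)%N ->
  primitive_elt a ->
  (1 <= l)%N -> (l < (q ^ n - 1) %/ (q ^ m - 1))%N ->
  (2 <= size s)%N ->
  sorted ltn s ->
  (1 <= head 0%N s)%N ->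
  (last 0%N s <= Lmin)%N ->
  (Lmin < n %/ m)%N ->
  (forall i, (i < size s)%N -> is_subfield (flag_sub E a l (nth 0%N s i)))
    <-> s = [:: 1%N; Lmin].
Proof.
move=> q n m Lmin _ _ _ _ size_s sorted_s head_s last_s _.
have Lmin_deg : Lmin = adjoin_degree E (a ^+ l) by rewrite /Lmin size_minPoly.
rewrite Lmin_deg in last_s *.
split=> [galois | -> [|[|i]] //= _].
- apply: increasing_seq_one_d => // k /(nthP 0%N) [i lt_i_s <-] k_ge2.
  exact: adjoin_degree_le_subfield_flag k_ge2 (galois i lt_i_s).
- exact: flag_sub1_subfield.
- exact: flag_sub_adjoin_degree_subfield.
Qed.
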